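(* Let $W$ be the affine Weyl group of an irreducible reduced crystallographic root system of rank 2, with simple generators $s_0,s_1,s_2$ and $W_0=\langle s_1,s_2\rangle$. Let $H_{r_0}$, $H_{r_1}$ be two adjacent parallel hyperplanes (i.e. $H_{\alpha,c}$ and $H_{\alpha,c+1}$ for a root $\alpha$ and $c\in\mathbb{Z}$). If both the alcove $w\in W$ and the identity alcove lie in the strip between $H_{r_0}$ and $H_{r_1}$, then $w$ is not the element of maximal length in the coset $wW_0$.
   Context: $W$ is generated by the reflections $s_{\beta;k}$ in the lines $H_{\beta,k}=\{v:\langle v,\beta\rangle=k\}$ ($\beta$ a root, $k\in\mathbb{Z}$) of a Euclidean plane; as a Coxeter group its simple generators $s_0,s_1,s_2$ are the reflections in the walls of the fundamental alcove $A_0$, with $s_0$ the reflection in the wall not through the origin; $W_0=\langle s_1,s_2\rangle$ is the finite Weyl group. Elements are identified with alcoves via $w\mapsto wA_0$. $\ell$ is Coxeter length. *)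

From HB Require Import structures.
From mathcomp Require Import all_boot all_order all_algebra.
From mathcomp Require Import reals.
Set Implicit Arguments. Unset Strict Implicit. Unset Printing Implicit Defensive.
Import Order.TTheory GRing.Theory Num.Theory.
Local Open Scope ring_scope.

(* The irreducible reduced crystallographic root systems of rank 2
   (B2 and C2 are the same root system up to relabelling). *)
Inductive rtype := A2 | B2 | G2.

(* Cartan integers C_ij = <alpha_i^vee, alpha_j>, i,j in {1,2}.
   A2: standard. B2: alpha_1 long, alpha_2 short. G2: alpha_1 short, alpha_2 long. *)
Definition cartan12 (t : rtype) : int :=
  match t with A2 => -1 | B2 => -1 | G2 => -3 end.
Definition cartan21 (t : rtype) : int :=
  match t with A2 => -1 | B2 => -2 | G2 => -1 end.

Definition cartan (t : rtype) : 'M[int]_2 :=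
  \matrix_(i < 2, j < 2)
    (if i == j then 2 else if (i : nat) == 0%N then cartan12 t else cartan21 t).

(* Roots are written by their coordinates (a,b) : beta = a alpha_1 + b alpha_2. *)
Definition pos_roots (t : rtype) : seq (int * int) :=
  match t with
  | A2 => [:: (1, 0); (0, 1); (1, 1)]
  | B2 => [:: (1, 0); (0, 1); (1, 1); (1, 2)]
  | G2 => [:: (1, 0); (0, 1); (1, 1); (2, 1); (3, 1); (3, 2)]
  end%R.

Definition root_system (t : rtype) : seq (int * int) :=
  pos_roots t ++ [seq (- p.1, - p.2) | p <- pos_roots t].

(* highest root theta, and its coroot theta^vee in the basis of simple coroots *)
Definition highest_root (t : rtype) : int * int :=
  match t with A2 => (1, 1) | B2 => (1, 2) | G2 => (3, 2) end%R.
Definition highest_coroot (t : rtype) : int * int :=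
  match t with A2 => (1, 1) | B2 => (1, 1) | G2 => (1, 2) end%R.

Definition vec2 (p q : int) : 'cV[int]_2 :=
  \col_(i < 2) (if (i : nat) == 0%N then p else q).

(* Points v of the plane are given by their coordinates
   x = (<v,alpha_1>, <v,alpha_2>) (basis of fundamental coweights). *)
Definition pairing {R : ringType} (beta : int * int) (x : 'cV[R]_2) : R :=
  beta.1%:~R * x ord0 ord0 + beta.2%:~R * x ord_max ord0.

Definition aff := ('M[int]_2 * 'cV[int]_2)%type.
Definition aff_comp (f g : aff) : aff := (f.1 *m g.1, f.1 *m g.2 + f.2).
Definition aff_id : aff := (1%:M, 0).
Definition aff_act {R : ringType} (f : aff) (x : 'cV[R]_2) : 'cV[R]_2 :=
  map_mx (fun z : int => z%:~R) f.1 *m x + map_mx (fun z : int => z%:~R) f.2.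

(* values (<beta^vee,alpha_1>, <beta^vee,alpha_2>) of a coroot given by its
   coordinates (c,d) : beta^vee = c alpha_1^vee + d alpha_2^vee *)
Definition coroot_vals (t : rtype) (cd : int * int) : 'cV[int]_2 :=
  (cartan t)^T *m vec2 cd.1 cd.2.

(* reflection s_{beta;k} in H_{beta,k}: v |-> v - (<v,beta> - k) beta^vee *)
Definition refl (beta : int * int) (cv : 'cV[int]_2) (k : int) : aff :=
  (1%:M - cv *m (vec2 beta.1 beta.2)^T, k *: cv).

(* simple generators s_0 = s_{theta;1}, s_1 = s_{alpha_1;0}, s_2 = s_{alpha_2;0} *)
Definition gen (t : rtype) (i : 'I_3) : aff :=
  match (i : nat) with
  | 0%N => refl (highest_root t) (coroot_vals t (highest_coroot t)) 1
  | 1%N => refl (1, 0) (coroot_vals t (1, 0)) 0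
  | _ => refl (0, 1) (coroot_vals t (0, 1)) 0
  end.

Definition word_elt (t : rtype) (w : seq 'I_3) : aff :=
  foldr (fun i acc => aff_comp (gen t i) acc) aff_id w.

Lemma has_word_len (t : rtype) (w : seq 'I_3) :
  exists n, [exists s : n.-tuple 'I_3, word_elt t s == word_elt t w].
Proof. exists (size w); apply/existsP; exists (in_tuple w); by []. Qed.

Definition coxlen (t : rtype) (w : seq 'I_3) : nat := ex_minn (has_word_len t w).

Definition in_A0 {R : realType} (t : rtype) (x : 'cV[R]_2) : Prop :=
  0 < x ord0 ord0 /\ 0 < x ord_max ord0 /\ pairing (highest_root t) x < 1.

Definition in_strip {R : realType} (beta : int * int) (c : int) (x : 'cV[R]_2) : Prop :=
  c%:~R < pairing beta x < (c + 1)%:~R.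

(* An element f of W acts, in the coordinates x = (<x,alpha_1>, <x,alpha_2>),
   as x |-> M x + t with M in the finite Weyl group and t in the coroot
   lattice.  For a positive root b, the alcove f A_0 lies in the strip
   k < <x,b> < k+1 for an integer k read off from M and t, and the number of
   hyperplanes separating A_0 from f A_0, the sum of the |k|, is the Coxeter
   length of f: it vanishes only at the identity, a generator changes it by at
   most one, and some generator decreases it.  With this formula, whether
   w s_1 or w s_2 is longer than w is, for each of the finitely many M, a
   linear condition on t, and the strip hypothesis, tested at one point of
   A_0, forces one of them. *)
From HB Require Import structures.
From mathcomp Require Import all_boot all_order all_algebra.
From mathcomp Require Import reals.
From mathcomp Require Import zify ring lra.
Import Order.TTheory GRing.Theory Num.Theory.
Local Open Scope ring_scope.

Record affz := Affz {
  lin11 : int; lin12 : int; lin21 : int; lin22 : int; tr1 : int; tr2 : int }.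

Definition affz_comp (f g : affz) : affz :=
  Affz (lin11 f * lin11 g + lin12 f * lin21 g) (lin11 f * lin12 g + lin12 f * lin22 g)
       (lin21 f * lin11 g + lin22 f * lin21 g) (lin21 f * lin12 g + lin22 f * lin22 g)
       (lin11 f * tr1 g + lin12 f * tr2 g + tr1 f) (lin21 f * tr1 g + lin22 f * tr2 g + tr2 f).

Definition affz_id : affz := Affz 1 0 0 1 0 0.

(* Literal coordinates of gen t i (see affz_of_gen), so that case analyses compute. *)
Definition affz_gen (t : rtype) (i : nat) : affz :=
  match t, i with
  | A2, 0%N => Affz 0 (-1) (-1) 0 1 1
  | A2, 1%N => Affz (-1) 0 1 1 0 0
  | A2, _ => Affz 1 1 0 (-1) 0 0
  | B2, 0%N => Affz 1 0 (-1) (-1) 0 1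
  | B2, 1%N => Affz (-1) 0 1 1 0 0
  | B2, _ => Affz 1 2 0 (-1) 0 0
  | G2, 0%N => Affz 1 0 (-3) (-1) 0 1
  | G2, 1%N => Affz (-1) 0 3 1 0 0
  | G2, _ => Affz 1 1 0 (-1) 0 0
  end.

Lemma affz_compA (f g h : affz) :
  affz_comp f (affz_comp g h) = affz_comp (affz_comp f g) h.
Proof.
case: f g h => ? ? ? ? ? ? [? ? ? ? ? ?] [? ? ? ? ? ?].
by rewrite /affz_comp /=; congr Affz; ring.
Qed.

Lemma affz_comp1 (f : affz) : affz_comp f affz_id = f.
Proof. by case: f => ? ? ? ? ? ?; rewrite /affz_comp /=; congr Affz; ring. Qed.

Lemma affz_1comp (f : affz) : affz_comp affz_id f = f.
Proof. by case: f => ? ? ? ? ? ?; rewrite /affz_comp /=; congr Affz; ring. Qed.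

Lemma affz_gen_invol (t : rtype) (i : nat) :
  affz_comp (affz_gen t i) (affz_gen t i) = affz_id.
Proof. by case: t; case: i => [|[|i]]. Qed.

Section Coordinates.

Let i0 : 'I_2 := ord0.
Let i1 : 'I_2 := ord_max.

Definition affz_of (f : aff) : affz :=
  Affz (f.1 i0 i0) (f.1 i0 i1) (f.1 i1 i0) (f.1 i1 i1) (f.2 i0 ord0) (f.2 i1 ord0).

Lemma ord2P (i : 'I_2) : i = i0 \/ i = i1.
Proof. by case: i => [[|[|//]]] ?; [left|right]; apply: val_inj. Qed.

Lemma sum_ord2 (V : nmodType) (F : 'I_2 -> V) : \sum_(j < 2) F j = F i0 + F i1.
Proof. by rewrite !big_ord_recl big_ord0 addr0; congr (F _ + F _); apply: val_inj. Qed.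

Lemma affz_of_inj : injective affz_of.
Proof.
case=> [M v] [M' v'] [E11 E12 E21 E22 E1 E2] /=.
congr pair; apply/matrixP => i j.
  by case: (ord2P i) => ->; case: (ord2P j) => ->.
have -> : j = ord0 by case: j => [[|//]] ?; apply: val_inj.
by case: (ord2P i) => ->.
Qed.

Lemma affz_of_comp (f g : aff) :
  affz_of (aff_comp f g) = affz_comp (affz_of f) (affz_of g).
Proof. by rewrite /affz_of /aff_comp /affz_comp /= !mxE !sum_ord2. Qed.

Lemma affz_of_id : affz_of aff_id = affz_id.
Proof. by rewrite /affz_of /aff_id /= !mxE. Qed.

Lemma affz_of_gen (t : rtype) (i : 'I_3) : affz_of (gen t i) = affz_gen t i.
Proof.
case: i => [[|[|[|//]]] ?]; case: t;
  by rewrite /affz_of /gen /refl /coroot_vals /cartan /vec2 /= !(mxE, sum_ord2, big_ord1).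
Qed.

Lemma pairing_aff_act (R : realType) (b : int * int) (f : aff) (x : 'cV[R]_2) :
  pairing b (aff_act f x) =
  (b.1 * lin11 (affz_of f) + b.2 * lin21 (affz_of f))%:~R * x i0 ord0
  + (b.1 * lin12 (affz_of f) + b.2 * lin22 (affz_of f))%:~R * x i1 ord0
  + (b.1 * tr1 (affz_of f) + b.2 * tr2 (affz_of f))%:~R.
Proof. by rewrite /pairing /aff_act /affz_of !mxE !sum_ord2 !mxE /= !intrD !intrM; ring. Qed.

End Coordinates.

Lemma affz_of_word_cons (t : rtype) (i : 'I_3) (w : seq 'I_3) :
  affz_of (word_elt t (i :: w)) = affz_comp (affz_gen t i) (affz_of (word_elt t w)).
Proof. by rewrite /= affz_of_comp affz_of_gen. Qed.

Lemma affz_of_word_cat (t : rtype) (w u : seq 'I_3) :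
  affz_of (word_elt t (w ++ u)) =
  affz_comp (affz_of (word_elt t w)) (affz_of (word_elt t u)).
Proof.
elim: w => [|i w IHw]; first by rewrite /= affz_of_id affz_1comp.
by rewrite cat_cons !affz_of_word_cons IHw affz_compA.
Qed.

Lemma affz_of_word1 (t : rtype) (i : 'I_3) : affz_of (word_elt t [:: i]) = affz_gen t i.
Proof. by rewrite affz_of_word_cons /= affz_of_id affz_comp1. Qed.

Definition weyl0 (t : rtype) : seq (int * int * int * int) :=
  match t with
  | A2 => [:: (1, 0, 0, 1); (-1, 0, 1, 1); (1, 1, 0, -1); (0, -1, -1, 0);
             (0, 1, -1, -1); (-1, -1, 1, 0)]
  | B2 => [:: (1, 0, 0, 1); (-1, 0, 1, 1); (1, 2, 0, -1); (1, 0, -1, -1);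
             (1, 2, -1, -1); (-1, 0, 0, -1); (-1, -2, 1, 1); (-1, -2, 0, 1)]
  | G2 => [:: (1, 0, 0, 1); (-1, 0, 3, 1); (1, 1, 0, -1); (1, 0, -3, -1);
             (2, 1, -3, -1); (-1, 0, 0, -1); (-1, -1, 3, 2); (1, 1, -3, -2);
             (-2, -1, 3, 1); (-2, -1, 3, 2); (2, 1, -3, -2); (-1, -1, 0, 1)]
  end%R.

Definition in_coroot_lattice (t : rtype) (x y : int) : Prop :=
  match t with
  | A2 => (3 %| x + 2 * y)%Z
  | B2 => (2 %| x)%Z
  | G2 => True
  end.

Definition in_affW (t : rtype) (f : affz) : Prop :=
  (lin11 f, lin12 f, lin21 f, lin22 f) \in weyl0 t /\ in_coroot_lattice t (tr1 f) (tr2 f).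

Definition ind_neg (z : int) : int := if z < 0 then 1 else 0.

(* f A_0 lies between H_{b,k} and H_{b,k+1} for k = strip_index b f: evaluate
   <f x, b> at x = eps (1,1) with eps > 0 small. *)
Definition strip_index (b : int * int) (f : affz) : int :=
  b.1 * tr1 f + b.2 * tr2 f
  - ind_neg (b.1 * (lin11 f + lin12 f) + b.2 * (lin21 f + lin22 f)).

Definition sep_count (t : rtype) (f : affz) : nat :=
  sumn [seq `|strip_index b f|%N | b <- pos_roots t].

Ltac case_weyl0 H := move: H; rewrite !inE => H;
  repeat (case/orP: H => [/eqP [-> -> -> ->]|H]); try (move/eqP: H => [-> -> -> ->]).

Lemma in_affW_id (t : rtype) : in_affW t affz_id.
Proof. by case: t; split => //=; lia. Qed.

Lemma in_affW_gen {t : rtype} (i : nat) {f : affz} :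
  in_affW t f -> in_affW t (affz_comp (affz_gen t i) f).
Proof.
case: f => a b c d x y [HM HT].
by case: t HM HT => HM /= HT; case_weyl0 HM; case: i => [|[|i]]; split => //=; lia.
Qed.

Lemma in_affW_word (t : rtype) (w : seq 'I_3) : in_affW t (affz_of (word_elt t w)).
Proof.
elim: w => [|i w IHw]; first by rewrite /= affz_of_id; apply: in_affW_id.
by rewrite affz_of_word_cons; apply: in_affW_gen.
Qed.

Lemma sep_count_id (t : rtype) : sep_count t affz_id = 0%N.
Proof. by case: t. Qed.

Lemma sep_count_eq0 {t : rtype} {f : affz} :
  in_affW t f -> sep_count t f = 0%N -> f = affz_id.
Proof.
case: f => a b c d x y [HM /= HT]; rewrite /sep_count.
case: t HM HT => HM /= HT; case_weyl0 HM; rewrite /strip_index /ind_neg /= => H0;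
  first [exfalso; lia | by have [-> ->] : x = 0 /\ y = 0 by lia].
Qed.

Lemma sep_count_gen_le {t : rtype} (i : nat) {f : affz} : in_affW t f ->
  (sep_count t (affz_comp (affz_gen t i) f) <= sep_count t f + 1)%N.
Proof.
case: f => a b c d x y [HM _]; rewrite /sep_count.
by case: t HM => HM; case_weyl0 HM; case: i => [|[|i]];
  rewrite /strip_index /ind_neg /=; lia.
Qed.

Lemma sep_count_descent {t : rtype} {f : affz} :
  in_affW t f -> (0 < sep_count t f)%N ->
  exists i : 'I_3, (sep_count t (affz_comp (affz_gen t i) f) < sep_count t f)%N.
Proof.
move=> Hf Hpos.
have : (sep_count t (affz_comp (affz_gen t 0) f) < sep_count t f)%N
       \/ (sep_count t (affz_comp (affz_gen t 1) f) < sep_count t f)%N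
       \/ (sep_count t (affz_comp (affz_gen t 2) f) < sep_count t f)%N.
  case: f Hf Hpos => a b c d x y [HM _]; rewrite /sep_count.
  by case: t HM => HM; case_weyl0 HM; rewrite /strip_index /ind_neg /= => ?; lia.
by case=> [H|[H|H]]; [exists ord0 | exists (@Ordinal 3 1 isT) | exists (@Ordinal 3 2 isT)].
Qed.

Lemma sep_count_word_le (t : rtype) (w : seq 'I_3) :
  (sep_count t (affz_of (word_elt t w)) <= size w)%N.
Proof.
elim: w => [|i w IHw]; first by rewrite /= affz_of_id sep_count_id.
rewrite affz_of_word_cons /=.
have := sep_count_gen_le i (in_affW_word t w); lia.
Qed.

Lemma word_of_sep_count {t : rtype} {f : affz} : in_affW t f ->
  exists s : seq 'I_3, size s = sep_count t f /\ affz_of (word_elt t s) = f.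
Proof.
move Hn : (sep_count t f) => n; elim: n f Hn => [|n IHn] f Hn Hf.
  by exists [::]; rewrite (sep_count_eq0 Hf Hn) /= affz_of_id.
have [i Hdesc] := sep_count_descent Hf (ltac:(by rewrite Hn)).
set g := affz_comp (affz_gen t i) f in Hdesc *.
have Hg : in_affW t g by apply: in_affW_gen.
have : (sep_count t f <= sep_count t g + 1)%N.
  by have := sep_count_gen_le i Hg; rewrite affz_compA affz_gen_invol affz_1comp.
move=> Hup; have [s [Hsize Hs]] := IHn g (ltac:(lia)) Hg.
exists (i :: s); split; first by rewrite /= Hsize.
by rewrite affz_of_word_cons Hs affz_compA affz_gen_invol affz_1comp.
Qed.

Lemma coxlen_sep_count (t : rtype) (w : seq 'I_3) :
  coxlen t w = sep_count t (affz_of (word_elt t w)).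
Proof.
rewrite /coxlen; case: ex_minnP => n /existsP [s /eqP Hs] Hmin.
apply/eqP; rewrite eqn_leq; apply/andP; split.
  have [s' [Hsize Hs']] := word_of_sep_count (in_affW_word t w).
  rewrite -Hsize; apply: Hmin; apply/existsP; exists (in_tuple s'); apply/eqP.
  exact: affz_of_inj.
by rewrite -Hs -{2}(size_tuple s) sep_count_word_le.
Qed.

(* Ten times <f x_0, b> for the point x_0 = (1/10, 1/10) of A_0. *)
Definition pairing10 (b : int * int) (f : affz) : int :=
  b.1 * (lin11 f + lin12 f) + b.2 * (lin21 f + lin22 f) + 10 * (b.1 * tr1 f + b.2 * tr2 f).

Ltac case_roots H := move: H; rewrite !inE => H;
  repeat (case/orP: H => [/eqP [-> ->]|H]); try (move/eqP: H => [-> ->]).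

Lemma right_ascent_in_strip {t : rtype} {f : affz} {b : int * int} {c : int} :
  in_affW t f -> b \in root_system t ->
  (10 * c < pairing10 b affz_id < 10 * c + 10) ->
  (10 * c < pairing10 b f < 10 * c + 10) ->
  (sep_count t f < sep_count t (affz_comp f (affz_gen t 1)))%N \/
  (sep_count t f < sep_count t (affz_comp f (affz_gen t 2)))%N.
Proof.
case: f b => a b' c' d x y [b1 b2] [HM _] Hb; rewrite /sep_count /pairing10 /=.
by case: t HM Hb => HM Hb; case_roots Hb; case_weyl0 HM;
  rewrite /strip_index /ind_neg /= => ? ?; lia.
Qed.

Lemma aff_act_id (R : nzRingType) (x : 'cV[R]_2) : aff_act aff_id x = x.
Proof. by rewrite /aff_act /= map_mx1 map_mx0 mul1mx addr0. Qed.

Definition A0_point (R : realType) : 'cV[R]_2 := \col_(i < 2) 10%:R^-1.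

Lemma A0_point_in_A0 (R : realType) (t : rtype) : in_A0 t (A0_point R).
Proof. by rewrite /in_A0 /pairing /A0_point !mxE; case: t => /=; (split; [|split]); lra. Qed.

Lemma pairing_A0_point (R : realType) (b : int * int) (f : aff) :
  pairing b (aff_act f (A0_point R)) = (pairing10 b (affz_of f))%:~R / 10.
Proof. by rewrite pairing_aff_act /A0_point /pairing10 !mxE !intrD !intrM; field. Qed.

Lemma in_strip_A0_point {R : realType} {b : int * int} {c : int} {f : aff} :
  in_strip b c (aff_act f (A0_point R)) -> 10 * c < pairing10 b (affz_of f) < 10 * c + 10.
Proof.
rewrite /in_strip pairing_A0_point; move: (pairing10 b _) => z /andP[lo hi].
by apply/andP; split; rewrite -(ltr_int R) ?intrD intrM; lra.
Qed.

Theorem lemma4p39 (R : realType) (t : rtype) (w : seq 'I_3)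
    (beta : int * int) (c : int) :
  beta \in root_system t ->
  (forall x : 'cV[R]_2, in_A0 t x -> in_strip beta c x) ->
  (forall x : 'cV[R]_2, in_A0 t x -> in_strip beta c (aff_act (word_elt t w) x)) ->
  exists u : seq 'I_3,
    all (fun i => i != ord0) u /\ (coxlen t w < coxlen t (w ++ u))%N.
Proof.
move=> Hbeta HA0 HwA0.
have Hid : 10 * c < pairing10 beta affz_id < 10 * c + 10.
  rewrite -affz_of_id; apply: (@in_strip_A0_point R).
  by rewrite aff_act_id; apply/HA0/A0_point_in_A0.
have Hw := in_strip_A0_point (HwA0 _ (A0_point_in_A0 R t)).
have [Hs1|Hs2] := right_ascent_in_strip (in_affW_word t w) Hbeta Hid Hw.
- exists [:: @Ordinal 3 1 isT]; split => //.
  by rewrite !coxlen_sep_count affz_of_word_cat affz_of_word1.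
- exists [:: @Ordinal 3 2 isT]; split => //.
  by rewrite !coxlen_sep_count affz_of_word_cat affz_of_word1.
Qed.
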